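(* Let $L>0$, $\theta_1>0$, $\theta_2>0$, $0\le \epsilon<1$, $\omega\ge 0$, and let $c(t)=\theta_1(1+\epsilon\cos(\omega t))$. Fix a setpoint $x^*\in(0,L)$ and a constant $v_{\max}$ with $v(x^* )<v_{\max}<1$, where $v(x^* )=\frac{\theta_2x^*}{1+\theta_2x^*}$. Let $S(x^* )\in\mathbb{R}$ satisfy $S(x^* )\ge S_{\min}(x^* )$, where $$S_{\min}(x^* )=\frac{x^*}{\frac{1}{\theta_2x^*}+1}\max\left\{\frac{v_{\max}\left(1+\frac{1}{\theta_2x^*}\right)-1}{x^*};\ \frac{1}{L-x^*}\right\},$$ and let $a_{\rm l}(x^* )>0$ and $a_{\rm r}(x^* )>0$ be solutions of $$a_{\rm l}(x^* )(v_{\max}-v(x^* ))-S(x^* )\big(1-e^{-a_{\rm l}(x^* )x^*}\big)=0,\qquad a_{\rm r}(x^* )v(x^* )-S(x^* )\big(1-e^{-a_{\rm r}(x^* )(L-x^* )}\big)=0.$$ Consider the delay-free system $$\dot x(t)=c(t)\left[-\frac{\theta_2x(t)}{(1+\theta_2x(t))(1-U(t))}+\frac{U(t)}{1-U(t)}\right]$$ in closed loop with the feedback $U(t)=v(x(t),x^* )$ (defined in the context), with initial condition $x(0)=x_0\in[0,L)$. Then the closed-loop system is globally exponentially stable at $x=x^*$ on the physical domain: for every $x_0\in[0,L)$ the solution exists for all $t\ge0$, stays in $[0,L]$, and there exist constants $k,\lambda>0$ (independent of $x_0$) such that $|x(t)-x^*|\le k e^{-\lambda t}|x_0-x^*|$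 for all $t\ge 0$.
   Context: The feedback is the piecewise exponential (''Bang-Bang-like'') law $v(x,x^* )=v_{\rm l}(x,x^* )$ for $x\le x^*$ and $v(x,x^* )=v_{\rm r}(x,x^* )$ for $x> x^*$, where $$v_{\rm l}(x,x^* )=v(x^* )+(v_{\max}-v(x^* ))\frac{1-e^{a_{\rm l}(x^* )(x-x^* )}}{1-e^{-a_{\rm l}(x^* )x^*}},\qquad v_{\rm r}(x,x^* )=v(x^* )-v(x^* )\frac{1-e^{-a_{\rm r}(x^* )(x-x^* )}}{1-e^{-a_{\rm r}(x^* )(L-x^* )}},$$ with $v(x^* )=\theta_2x^*/(1+\theta_2x^* )$. Here $x(t)$ is the length of the fully filled zone of a screw extruder, $U$ is the inlet filling ratio, $v_{\max}<1$ is the maximal inlet filling ratio. *)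

From Stdlib Require Import Reals Lra.
Open Scope R_scope.

Definition vstar (th2 xs : R) : R := th2 * xs / (1 + th2 * xs).

Definition Smin (L th2 vmax xs : R) : R :=
  xs / (/ (th2 * xs) + 1) *
  Rmax ((vmax * (1 + / (th2 * xs)) - 1) / xs) (1 / (L - xs)).

Definition v_left (th2 vmax al xs x : R) : R :=
  vstar th2 xs + (vmax - vstar th2 xs) *
    ((1 - exp (al * (x - xs))) / (1 - exp (- al * xs))).

Definition v_right (L th2 ar xs x : R) : R :=
  vstar th2 xs - vstar th2 xs *
    ((1 - exp (- ar * (x - xs))) / (1 - exp (- ar * (L - xs)))).

Definition feedback (L th2 vmax al ar xs x : R) : R :=
  if Rle_dec x xs then v_left th2 vmax al xs x else v_right L th2 ar xs x.

Definition cfun (th1 eps om t : R) : R := th1 * (1 + eps * cos (om * t)).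

Definition rhs (th1 th2 eps om t x U : R) : R :=
  cfun th1 eps om t *
   (- (th2 * x) / ((1 + th2 * x) * (1 - U)) + U / (1 - U)).

Definition cl_field (L th1 th2 eps om vmax al ar xs t x : R) : R :=
  rhs th1 th2 eps om t x (feedback L th2 vmax al ar xs x).

Definition cl_solution (L th1 th2 eps om vmax al ar xs x0 : R) (x : R -> R) : Prop :=
  x 0 = x0 /\
  (forall e, 0 < e -> exists d, 0 < d /\
      forall t, 0 <= t < d -> Rabs (x t - x0) < e) /\
  (forall t, 0 < t ->
      derivable_pt_lim x t (cl_field L th1 th2 eps om vmax al ar xs t (x t))).

(* The closed loop reads [x' = c(t) g(x)] with [g(x) = (U(x) - v(x)) / (1 - U(x))],
   [v(z) = th2 z / (1 + th2 z)] being the equilibrium input at [z].  Left of [xs] the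
   feedback satisfies [U >= v(xs) > v(x)], right of it [U <= v(xs) < v(x)], which gives
   the sector condition [(x - xs) g(x) <= - m (x - xs)^2] on [0, L], with
   [m = sector_gain L th2 xs].  As [c >= th1 (1 - eps) > 0], the weighted square [W],
   equal to [(x - xs)^2 / xs^2] left of [xs] and [(x - xs)^2 / (L - xs)^2] right of it,
   decays like [exp (- 2 m th1 (1 - eps) t)]; its unit sublevel set is exactly [0, L].
   Existence: the time change [tau' = c] reduces the problem to [y' = g(y)], solved by
   inverting [int dz / g(z)]; since [g] vanishes at most linearly at [xs], the
   equilibrium is not reached in finite time. *)

From Stdlib Require Import Reals Lra ClassicalEpsilon Classical_Prop Classical_Pred_Type.
From Stdlib Require Import Ranalysis5.
From Coquelicot Require Import Coquelicot.
Open Scope R_scope.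

Lemma exp_le_compat (a b : R) : a <= b -> exp a <= exp b.
Proof.
  intro H. destruct (Req_dec a b) as [->|Hne]; [lra|].
  left. apply exp_increasing. lra.
Qed.

Lemma exp_neg_lt_1 (a : R) : 0 < a -> exp (- a) < 1.
Proof. intro H. rewrite <- exp_0. apply exp_increasing. lra. Qed.

Lemma continuity_pt_of_derivable_pt_lim (f : R -> R) (x l : R) :
  derivable_pt_lim f x l -> continuity_pt f x.
Proof. intro H. apply derivable_continuous_pt. exists l. exact H. Qed.

Lemma continuity_pt_of_ex_derive (f : R -> R) (z : R) : ex_derive f z -> continuity_pt f z.
Proof. intro H. apply continuity_pt_filterlim, (ex_derive_continuous f z H). Qed.

Lemma derivable_pt_lim_scal_id (a t : R) : derivable_pt_lim (fun t => a * t) t a.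
Proof. apply is_derive_Reals. auto_derive; [exact I | ring]. Qed.

Lemma continuity_pt_Rmax_l (a u : R) : continuity_pt (Rmax a) u.
Proof.
  apply continuity_pt_ext with (f := fun v => (a + v + Rabs (v - a)) / 2).
  - intro v. unfold Rmax. destruct (Rle_dec a v).
    + rewrite Rabs_right by lra. lra.
    + rewrite Rabs_left by lra. lra.
  - apply continuity_pt_div; [| apply continuity_pt_const; intros ??; reflexivity | lra].
    apply continuity_pt_plus.
    + apply continuity_pt_plus; [apply continuity_pt_const; intros ??; reflexivity |].
      apply derivable_continuous_pt, derivable_pt_id.
    + apply (continuity_pt_comp (fun v => v - a) Rabs); [| apply Rcontinuity_abs].
      apply continuity_pt_minus; [apply derivable_continuous_pt, derivable_pt_id |].
      apply continuity_pt_const; intros ??; reflexivity.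
Qed.

Definition right_continuous_at (f : R -> R) (t : R) : Prop :=
  forall e, 0 < e -> exists d, 0 < d /\
    forall s, t <= s < t + d -> Rabs (f s - f t) < e.

Definition solves (f : R -> R -> R) (x : R -> R) (x0 : R) : Prop :=
  x 0 = x0 /\ right_continuous_at x 0 /\
  forall t, 0 < t -> derivable_pt_lim x t (f t (x t)).

Lemma solves_opp (f : R -> R -> R) (y : R -> R) (x0 : R) :
  solves (fun t z => - f t (- z)) y (- x0) -> solves f (fun t => - y t) x0.
Proof.
  intros [Hy0 [Hrc Hder]]. split; [|split].
  - rewrite Hy0. ring.
  - intros e He. destruct (Hrc e He) as [d [Hd Hnear]].
    exists d; split; [exact Hd|]. intros s Hs.
    replace (- y s - - y 0) with (- (y s - y 0)) by ring.
    rewrite Rabs_Ropp. apply Hnear, Hs.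
  - intros t Ht. rewrite <- (Ropp_involutive (f t (- y t))).
    apply derivable_pt_lim_opp, Hder, Ht.
Qed.

Lemma solves_time_change (c g tau y : R -> R) (x0 : R) :
  tau 0 = 0 -> (forall t, derivable_pt_lim tau t (c t)) -> (forall t, 0 < t -> 0 < tau t) ->
  solves (fun _ z => g z) y x0 -> solves (fun t z => c t * g z) (fun t => y (tau t)) x0.
Proof.
  intros Htau0 Htau Htau_pos [Hy0 [Hrc Hder]]. split; [|split].
  - rewrite Htau0. exact Hy0.
  - intros e He. destruct (Hrc e He) as [d [Hd Hnear]].
    destruct (continuity_pt_of_derivable_pt_lim _ _ _ (Htau 0) d Hd) as [d' [Hd' Hnear']].
    exists d'; split; [exact Hd'|]. intros s Hs. rewrite Htau0. apply Hnear.
    destruct (Req_dec s 0) as [->|Hs0]; [lra|].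
    assert (Habs : Rabs (tau s - tau 0) < d).
    { apply Hnear'. split; [split; [exact I | auto]|].
      simpl; unfold R_dist. rewrite Rabs_right; lra. }
    rewrite Htau0, Rminus_0_r in Habs. apply Rabs_def2 in Habs.
    pose proof (Htau_pos s ltac:(lra)). lra.
  - intros t Ht. rewrite Rmult_comm.
    apply (derivable_pt_lim_comp tau y); [apply Htau | apply Hder, Htau_pos, Ht].
Qed.

Lemma right_continuous_at_agree (F f : R -> R) (t : R) :
  continuity_pt F t -> (forall s, t <= s -> F s = f s) -> right_continuous_at f t.
Proof.
  intros HF Hagree e He.
  destruct (HF e He) as [d [Hd Hnear]].
  exists d; split; [exact Hd|]. intros s Hs.
  rewrite <- !Hagree by lra.
  destruct (Req_dec s t) as [->|Hst]; [rewrite Rminus_diag, Rabs_R0; lra|].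
  apply Hnear. split; [split; [exact I | auto]|].
  simpl; unfold R_dist. rewrite Rabs_right; lra.
Qed.

Lemma right_continuous_at_of_continuity_pt (f : R -> R) (t : R) :
  continuity_pt f t -> right_continuous_at f t.
Proof. intro Hf. apply (right_continuous_at_agree f); auto. Qed.

Lemma continuity_pt_freeze_left (f : R -> R) (t : R) :
  right_continuous_at f t ->
  continuity_pt (fun s => if Rle_dec s t then f t else f s) t.
Proof.
  intros Hf e He.
  destruct (Hf e He) as [d [Hd Hnear]].
  exists d; split; [exact Hd|]. intros s [[_ Hst] Hs]. simpl in *; unfold R_dist in *.
  destruct (Rle_dec t t) as [_|]; [|lra].
  destruct (Rle_dec s t) as [Hle|Hgt]; [rewrite Rminus_diag, Rabs_R0; lra|].
  apply Hnear. rewrite Rabs_right in Hs; lra.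
Qed.

Lemma le_of_derive_nonpos_right (h dh : R -> R) (t eta : R) :
  right_continuous_at h t ->
  (forall s, t < s < t + eta -> derivable_pt_lim h s (dh s) /\ dh s <= 0) ->
  forall u, t < u < t + eta -> h u <= h t.
Proof.
  intros Hrc Hder u Hu.
  destruct (Rle_lt_dec (h u) (h t)) as [Hle|Hgt]; [exact Hle|exfalso].
  destruct (Hrc (h u - h t)) as [d [Hd Hnear]]; [lra|].
  assert (Hmin : 0 < Rmin d (u - t)) by (apply Rmin_glb_lt; lra).
  pose proof (Rmin_l d (u - t)); pose proof (Rmin_r d (u - t)).
  set (s := t + Rmin d (u - t) / 2).
  assert (Hhs : h s - h t < h u - h t).
  { apply (Rabs_def2 (h s - h t)), Hnear. unfold s; lra. }
  destruct (MVT_cor2 h dh s u) as [c [Hmvt Hc]]; [unfold s; lra| |].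
  - intros c Hc. apply Hder. unfold s in Hc; lra.
  - destruct (Hder c) as [_ Hneg]; [unfold s in Hc; lra|].
    assert (dh c * (u - s) <= 0) by (apply Rmult_le_0_r; unfold s in *; lra).
    lra.
Qed.

(* A real-induction argument on the supremum of the times up to which [h]
   stays below its initial value. *)
Lemma le_initial_of_locally_nonincreasing (h : R -> R) :
  (forall t, 0 < t -> continuity_pt h t) ->
  (forall t, 0 <= t -> h t <= h 0 ->
     exists eta, 0 < eta /\ forall u, t < u < t + eta -> h u <= h t) ->
  forall t, 0 <= t -> h t <= h 0.
Proof.
  intros Hc Hloc T HT.
  destruct (Rle_lt_dec (h T) (h 0)) as [r|r]; [exact r|exfalso].
  set (E := fun s => 0 <= s <= T /\ forall u, 0 <= u <= s -> h u <= h 0).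
  assert (HE0 : E 0) by (split; [lra | intros u Hu; replace u with 0 by lra; lra]).
  destruct (completeness E) as [m [Hub Hlub]].
  { exists T. intros s Hs. apply Hs. }
  { exists 0. exact HE0. }
  assert (Hm0 : 0 <= m) by (apply Hub, HE0).
  assert (HmT : m <= T) by (apply Hlub; intros s Hs; apply Hs).
  assert (Hbelow : forall u, 0 <= u < m -> h u <= h 0).
  { intros u Hu.
    assert (Hnub : ~ is_upper_bound E u) by (intro Hu'; specialize (Hlub u Hu'); lra).
    apply not_all_ex_not in Hnub as [s Hs].
    apply imply_to_and in Hs as [Hs1 Hs2].
    apply Hs1. lra. }
  assert (Hmval : h m <= h 0).
  { destruct (Req_dec m 0) as [->|Hm]; [lra|].
    destruct (Rle_lt_dec (h m) (h 0)) as [r1|r1]; [exact r1|exfalso].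
    destruct (Hc m ltac:(lra) (h m - h 0)) as [d [Hd Hnear]]; [lra|].
    set (u := Rmax 0 (m - d / 2)).
    assert (Hu : 0 <= u < m) by (unfold u; split; [apply Rmax_l | apply Rmax_lub_lt; lra]).
    assert (Hud : m - d / 2 <= u) by apply Rmax_r.
    assert (Habs : Rabs (h u - h m) < h m - h 0).
    { apply Hnear. split; [split; [exact I | lra]|].
      simpl; unfold R_dist. rewrite Rabs_left; lra. }
    pose proof (Hbelow u Hu). apply Rabs_def2 in Habs. lra. }
  destruct (Hloc m Hm0 Hmval) as [eta [Heta Hnear]].
  assert (HmT' : m < T) by (destruct (Req_dec m T) as [->|]; lra).
  pose proof (Rmin_l (m + eta / 2) T). pose proof (Rmin_r (m + eta / 2) T).
  assert (m < Rmin (m + eta / 2) T) by (apply Rmin_glb_lt; lra).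
  set (s := Rmin (m + eta / 2) T) in *.
  assert (Hs : E s).
  { split; [lra|].
    intros u Hu. destruct (Rlt_le_dec u m); [apply Hbelow; lra|].
    destruct (Req_dec u m) as [->|]; [lra|].
    pose proof (Hnear u ltac:(lra)). lra. }
  specialize (Hub s Hs). lra.
Qed.

Section IncreasingSolution.

Variables (g : R -> R) (a b K : R).
Hypothesis Hab : a < b.
Hypothesis HK : 0 < K.
Hypothesis g_cont : forall z, a <= z < b -> continuity_pt g z.
Hypothesis g_pos : forall z, a <= z < b -> 0 < g z.
Hypothesis g_le : forall z, a <= z < b -> g z <= K * (b - z).

(* The solution of [y' = g y], [y 0 = a] is the inverse of the time map
   [T z = int_a^z 1/g]; [g] is frozen left of [a] so that [T] is smooth at [a]. *)
Let ginv (u : R) : R := / g (Rmax a u).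
Let T (z : R) : R := RInt ginv a z.

Lemma Rmax_in_interval (u : R) : u < b -> a <= Rmax a u < b.
Proof. intro Hu. split; [apply Rmax_l | apply Rmax_lub_lt; lra]. Qed.

Lemma ginv_pos (u : R) : u < b -> 0 < ginv u.
Proof. intro Hu. apply Rinv_0_lt_compat, g_pos, Rmax_in_interval, Hu. Qed.

Lemma ginv_cont (u : R) : u < b -> continuity_pt ginv u.
Proof.
  intro Hu. pose proof (g_pos _ (Rmax_in_interval u Hu)).
  apply continuity_pt_inv; [|lra].
  apply (continuity_pt_comp (Rmax a) g); [apply continuity_pt_Rmax_l|].
  apply g_cont, Rmax_in_interval, Hu.
Qed.

Lemma T_derive (z : R) : z < b -> derivable_pt_lim T z (ginv z).
Proof.
  intro Hz. apply is_derive_Reals, (is_derive_RInt ginv T a z).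
  - exists (mkposreal (b - z) ltac:(lra)). intros y Hy.
    change (Rabs (y - z) < b - z) in Hy. apply Rabs_def2 in Hy.
    apply (RInt_correct ginv a y), ex_RInt_continuous. intros w Hw.
    apply continuity_pt_filterlim, ginv_cont.
    assert (Rmax a y < b) by (apply Rmax_lub_lt; lra). lra.
  - apply continuity_pt_filterlim, ginv_cont, Hz.
Qed.

Lemma T_a : T a = 0.
Proof. apply (RInt_point (V := R_CompleteNormedModule)). Qed.

Lemma T_lt (z1 z2 : R) : z1 < z2 < b -> T z1 < T z2.
Proof.
  intro Hz. destruct (MVT_cor2 T ginv z1 z2) as [c [Hmvt Hc]]; [lra| |].
  - intros c Hc. apply T_derive. lra.
  - pose proof (ginv_pos c ltac:(lra)). nra.
Qed.

Lemma T_inj (z1 z2 : R) : z1 < b -> z2 < b -> T z1 = T z2 -> z1 = z2.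
Proof.
  intros H1 H2 H. destruct (Rtotal_order z1 z2) as [Hl|[He|Hg]]; [| exact He |].
  - pose proof (T_lt z1 z2 ltac:(lra)). lra.
  - pose proof (T_lt z2 z1 ltac:(lra)). lra.
Qed.

(* [g <= K (b - z)] makes [T - (-ln (b - z)) / K] nondecreasing. *)
Lemma T_ge_log (z : R) : a <= z < b -> (ln (b - a) - ln (b - z)) / K <= T z.
Proof.
  intro Hz. destruct (Req_dec z a) as [->|Hza].
  { rewrite T_a. unfold Rdiv. rewrite Rminus_diag. lra. }
  set (Psi := fun u => T u + ln (b - u) / K).
  set (dPsi := fun u => ginv u + (/ (b - u) * (-1)) / K).
  destruct (MVT_cor2 Psi dPsi a z) as [c [Hmvt Hc]]; [lra| |].
  - intros c Hc. apply derivable_pt_lim_plus; [apply T_derive; lra|].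
    apply (derivable_pt_lim_scal_right (fun u => ln (b - u))).
    apply (derivable_pt_lim_comp (fun u => b - u) ln).
    + replace (-1) with (0 - 1) by ring.
      apply derivable_pt_lim_minus; [apply derivable_pt_lim_const | apply derivable_pt_lim_id].
    + apply derivable_pt_lim_ln. lra.
  - assert (Hd : 0 <= dPsi c).
    { assert (/ (K * (b - c)) <= ginv c).
      { apply Rinv_le_contravar; [apply g_pos, Rmax_in_interval; lra|].
        rewrite Rmax_right by lra. apply g_le. lra. }
      assert (/ (K * (b - c)) = (/ (b - c) * 1) / K) by (field; split; lra).
      unfold dPsi. lra. }
    assert (0 <= dPsi c * (z - a)) by (apply Rmult_le_pos; lra).
    unfold Psi in Hmvt. rewrite T_a in Hmvt. unfold Rdiv in *. lra.
Qed.

Lemma T_unbounded (s : R) : exists z, a <= z < b /\ s < T z.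
Proof.
  set (q := exp (- (K * Rabs s + 1))).
  assert (Hq0 : 0 < q) by apply exp_pos.
  assert (Hq1 : q < 1) by (apply exp_neg_lt_1; pose proof (Rabs_pos s); nra).
  exists (b - (b - a) * q).
  assert (Hz : a <= b - (b - a) * q < b) by nra.
  split; [exact Hz|].
  pose proof (T_ge_log _ Hz) as Hlog.
  replace (b - (b - (b - a) * q)) with ((b - a) * q) in Hlog by ring.
  rewrite ln_mult in Hlog by lra. unfold q in Hlog. rewrite ln_exp in Hlog. fold q in Hlog.
  replace ((ln (b - a) - (ln (b - a) + - (K * Rabs s + 1))) / K) with (Rabs s + / K)
    in Hlog by (field; lra).
  pose proof (Rle_abs s). pose proof (Rinv_0_lt_compat K HK). lra.
Qed.

Lemma T_onto (s : R) : 0 <= s -> exists z, a <= z < b /\ T z = s.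
Proof.
  intro Hs. destruct (Req_dec s 0) as [->|Hs0]; [exists a; split; [lra | exact T_a]|].
  destruct (T_unbounded s) as [z1 [Hz1 Hsz1]].
  assert (Haz1 : a < z1) by (destruct (Req_dec z1 a) as [->|]; [rewrite T_a in Hsz1|]; lra).
  destruct (IVT_interv (fun z => T z - s) a z1) as [z [Hz Hzs]]; [| lra | simpl; rewrite T_a; lra
    | simpl; lra |].
  - intros c Hc. apply continuity_pt_minus; [| apply continuity_pt_const; intros ??; reflexivity].
    apply (continuity_pt_of_derivable_pt_lim _ _ _ (T_derive c ltac:(lra))).
  - exists z. simpl in Hzs. split; lra.
Qed.

Definition inverse_time_map (s : R) : R :=
  epsilon (inhabits a) (fun z => a <= z < b /\ T z = s).

Local Notation y := inverse_time_map.

Lemma inverse_time_map_spec (s : R) : 0 <= s -> a <= y s < b /\ T (y s) = s.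
Proof. intro Hs. unfold inverse_time_map. apply epsilon_spec, T_onto, Hs. Qed.

Lemma inverse_time_map_0 : y 0 = a.
Proof.
  destruct (inverse_time_map_spec 0 (Rle_refl 0)) as [Hy HT].
  apply T_inj; [lra | lra | rewrite HT, T_a; reflexivity].
Qed.

Lemma inverse_time_map_le (s z : R) : 0 <= s -> a <= z < b -> s <= T z -> y s <= z.
Proof.
  intros Hs Hz HsT. destruct (inverse_time_map_spec s Hs) as [Hy HT].
  destruct (Rle_lt_dec (y s) z) as [Hle|Hlt]; [exact Hle|].
  pose proof (T_lt z (y s) ltac:(lra)). lra.
Qed.

Lemma inverse_time_map_mono (s1 s2 : R) : 0 <= s1 <= s2 -> y s1 <= y s2.
Proof.
  intro Hs. destruct (inverse_time_map_spec s2) as [Hy2 HT2]; [lra|].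
  apply inverse_time_map_le; lra.
Qed.

Lemma inverse_time_map_right_cont : right_continuous_at y 0.
Proof.
  intros e He. rewrite inverse_time_map_0.
  set (m := Rmin (a + e / 2) ((a + b) / 2)).
  pose proof (Rmin_l (a + e / 2) ((a + b) / 2)); pose proof (Rmin_r (a + e / 2) ((a + b) / 2)).
  assert (Hm : a < m < b) by (split; [apply Rmin_glb_lt|]; unfold m in *; lra).
  exists (T m). split; [rewrite <- T_a; apply T_lt; lra|].
  intros s Hs. rewrite Rplus_0_l in Hs.
  destruct (inverse_time_map_spec s (proj1 Hs)) as [Hy _].
  pose proof (inverse_time_map_le s m (proj1 Hs) ltac:(lra) ltac:(lra)).
  rewrite Rabs_right; unfold m in *; lra.
Qed.

Lemma inverse_time_map_derive (s : R) : 0 < s -> derivable_pt_lim y s (g (y s)).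
Proof.
  intro Hs.
  destruct (T_unbounded (s + 1)) as [z1 [Hz1 Hz1s]].
  assert (Haz1 : a < z1) by (destruct (Req_dec z1 a) as [->|]; [rewrite T_a in Hz1s|]; lra).
  assert (Hycont : continuity_pt y s).
  { apply (continuity_pt_recip_interv T y a z1 Haz1).
    - intros u v Hu Huv Hv. apply T_lt. lra.
    - intros u Hu1 Hu2. rewrite T_a in Hu1. unfold comp, id. apply inverse_time_map_spec. lra.
    - intros u Hu1 Hu2. rewrite T_a in Hu1. pose proof (inverse_time_map_spec u Hu1).
      split; [lra|]. apply inverse_time_map_le; lra.
    - intros c Hc. apply (continuity_pt_of_derivable_pt_lim _ _ _ (T_derive c ltac:(lra))).
    - rewrite T_a. lra. }
  destruct (inverse_time_map_spec s) as [Hys HTs]; [lra|].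
  destruct (inverse_time_map_spec (s + 1)) as [Hys1 _]; [lra|].
  assert (Prf : forall r, y (s / 2) <= r <= y (s + 1) -> derivable_pt T r).
  { intros r Hr. exists (ginv r). apply T_derive. lra. }
  assert (Hincr : y (s / 2) <= y s <= y (s + 1)) by (split; apply inverse_time_map_mono; lra).
  assert (HdT : derive_pt T (y s) (Prf (y s) Hincr) = / g (y s)).
  { apply derive_pt_eq_0.
    replace (/ g (y s)) with (ginv (y s)) by (unfold ginv; rewrite Rmax_right by lra; reflexivity).
    apply T_derive. lra. }
  pose proof (g_pos (y s) Hys).
  replace (g (y s)) with (1 / derive_pt T (y s) (Prf (y s) Hincr)) by (rewrite HdT; field; lra).
  apply (derivable_pt_lim_recip_interv T y (s / 2) (s + 1) s Prf Hycont); [lra | lra | |].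
  - intros u Hu. unfold comp, id. apply inverse_time_map_spec. lra.
  - rewrite HdT. apply Rinv_neq_0_compat. lra.
Qed.

Lemma solves_increasing : exists y, solves (fun _ z => g z) y a.
Proof.
  exists inverse_time_map. split; [|split].
  - exact inverse_time_map_0.
  - exact inverse_time_map_right_cont.
  - exact inverse_time_map_derive.
Qed.

End IncreasingSolution.

Section WeightedSquare.

Variables L xs : R.
Hypothesis Hxs : 0 < xs < L.

(* The weights make the sublevel set [W <= 1] exactly [0, L]. *)
Definition sq_weight (z : R) : R :=
  if Rle_dec z xs then / (xs * xs) else / ((L - xs) * (L - xs)).

Definition wsq (z : R) : R := (z - xs) * (z - xs) * sq_weight z.

Let rmin := Rmin xs (L - xs).

Lemma rmin_bounds : 0 < rmin <= xs /\ rmin <= L - xs.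
Proof.
  unfold rmin. pose proof (Rmin_l xs (L - xs)); pose proof (Rmin_r xs (L - xs)).
  split; [split; [apply Rmin_glb_lt|]|]; lra.
Qed.

Lemma sq_weight_bounds (z : R) : / (L * L) <= sq_weight z <= / (rmin * rmin).
Proof.
  pose proof rmin_bounds.
  unfold sq_weight. destruct (Rle_dec z xs); split; apply Rinv_le_contravar; nra.
Qed.

Lemma wsq_nonneg (z : R) : 0 <= wsq z.
Proof.
  pose proof (sq_weight_bounds z). pose proof rmin_bounds.
  assert (0 < / (L * L)) by (apply Rinv_0_lt_compat; nra).
  unfold wsq. apply Rmult_le_pos; [apply Rle_0_sqr | lra].
Qed.

Lemma sq_le_wsq (z : R) : (z - xs) * (z - xs) <= L * L * wsq z.
Proof.
  assert (Hw : 1 <= L * L * sq_weight z).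
  { replace 1 with (L * L * / (L * L)) by (field; lra).
    apply Rmult_le_compat_l; [nra | apply sq_weight_bounds]. }
  pose proof (Rle_0_sqr (z - xs)). unfold Rsqr in *. unfold wsq. nra.
Qed.

Lemma wsq_le_sq (z : R) : wsq z <= (z - xs) * (z - xs) / (rmin * rmin).
Proof.
  unfold wsq. apply Rmult_le_compat_l; [apply Rle_0_sqr | apply sq_weight_bounds].
Qed.

Lemma wsq_le_1 (z : R) : wsq z <= 1 <-> 0 <= z <= L.
Proof.
  unfold wsq, sq_weight. destruct (Rle_dec z xs);
    change (?q * / ?r) with (q / r); rewrite Rle_div_l by nra; split; intros; nra.
Qed.

Lemma wsq_lt_1 (z : R) : wsq z < 1 -> 0 < z < L.
Proof.
  unfold wsq, sq_weight. destruct (Rle_dec z xs);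
    change (?q * / ?r) with (q / r); rewrite Rlt_div_l by nra; nra.
Qed.

Lemma wsq_derive (z : R) : derivable_pt_lim wsq z (2 * (z - xs) * sq_weight z).
Proof.
  pose proof rmin_bounds.
  destruct (Rtotal_order z xs) as [Hlt|[->|Hgt]].
  - apply is_derive_Reals.
    apply (is_derive_ext_loc (fun u => (u - xs) * (u - xs) * / (xs * xs))).
    + exists (mkposreal (xs - z) ltac:(lra)). intros u Hu.
      change (Rabs (u - z) < xs - z) in Hu. apply Rabs_def2 in Hu.
      unfold wsq, sq_weight. destruct (Rle_dec u xs); [reflexivity | lra].
    + unfold sq_weight. destruct (Rle_dec z xs); [|lra]. auto_derive; [exact I | ring].
  - (* the weight jumps at [xs], but only against a factor [(z - xs)^2] *)
    intros e He. set (c := / (rmin * rmin)).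
    assert (Hc : 0 < c) by (apply Rinv_0_lt_compat; nra).
    exists (mkposreal (e / c) (Rdiv_lt_0_compat _ _ He Hc)). simpl. intros h Hh0 Hh.
    unfold wsq. rewrite Rminus_diag.
    replace ((xs + h - xs) * (xs + h - xs) * sq_weight (xs + h) - 0 * 0 * sq_weight xs)
      with (h * (h * sq_weight (xs + h))) by ring.
    replace (h * (h * sq_weight (xs + h)) / h - 2 * 0 * sq_weight xs)
      with (h * sq_weight (xs + h)) by (field; exact Hh0).
    pose proof (sq_weight_bounds (xs + h)) as [Hw1 Hw2].
    assert (0 < / (L * L)) by (apply Rinv_0_lt_compat; nra).
    rewrite Rabs_mult, (Rabs_right (sq_weight _)) by lra.
    apply Rle_lt_trans with (Rabs h * c); [apply Rmult_le_compat_l; [apply Rabs_pos | exact Hw2]|].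
    replace e with (e / c * c) by (field; lra).
    apply Rmult_lt_compat_r; assumption.
  - apply is_derive_Reals.
    apply (is_derive_ext_loc (fun u => (u - xs) * (u - xs) * / ((L - xs) * (L - xs)))).
    + exists (mkposreal (z - xs) ltac:(lra)). intros u Hu.
      change (Rabs (u - z) < z - xs) in Hu. apply Rabs_def2 in Hu.
      unfold wsq, sq_weight. destruct (Rle_dec u xs); [lra | reflexivity].
    + unfold sq_weight. destruct (Rle_dec z xs); [lra|]. auto_derive; [exact I | ring].
Qed.

Lemma abs_le_of_wsq_le (z z0 E : R) :
  0 <= E -> wsq z <= wsq z0 * (E * E) -> Rabs (z - xs) <= L / rmin * E * Rabs (z0 - xs).
Proof.
  intros HE Hz. pose proof rmin_bounds.
  assert (Hk : 0 <= L / rmin * E * Rabs (z0 - xs)).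
  { apply Rmult_le_pos; [apply Rmult_le_pos; [apply Rlt_le, Rdiv_lt_0_compat |]|
      apply Rabs_pos]; lra. }
  apply Rle_trans with (Rabs (L / rmin * E * Rabs (z0 - xs))); [|right; apply Rabs_right; lra].
  apply Rsqr_le_abs_0. unfold Rsqr.
  assert (Habs : Rabs (z0 - xs) * Rabs (z0 - xs) = (z0 - xs) * (z0 - xs)).
  { rewrite <- Rabs_mult. apply Rabs_right, Rle_ge, Rle_0_sqr. }
  replace (L / rmin * E * Rabs (z0 - xs) * (L / rmin * E * Rabs (z0 - xs)))
    with (L * L * ((z0 - xs) * (z0 - xs) / (rmin * rmin) * (E * E)))
    by (rewrite <- Habs; field; lra).
  apply Rle_trans with (L * L * wsq z); [apply sq_le_wsq|].
  apply Rmult_le_compat_l; [nra|].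
  apply Rle_trans with (wsq z0 * (E * E)); [exact Hz|].
  apply Rmult_le_compat_r; [nra | apply wsq_le_sq].
Qed.

End WeightedSquare.

Section SectorStability.

Variables (c gf x : R -> R) (x0 xs L m cmin d0 : R).
Hypothesis Hxs : 0 < xs < L.
Hypothesis Hx0 : 0 <= x0 < L.
Hypothesis Hm : 0 < m.
Hypothesis Hcmin : 0 < cmin.
Hypothesis Hd0 : 0 < d0.
Hypothesis Hc : forall t, cmin <= c t.
(* The sector condition is also needed slightly below [0]: a solution is only
   right-continuous at [t = 0], so it may leave [0, L] before the Lyapunov
   argument applies. *)
Hypothesis Hsector : forall z, - d0 < z <= L -> (z - xs) * gf z <= - m * ((z - xs) * (z - xs)).
Hypothesis Hsol : solves (fun t z => c t * gf z) x x0.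

Let lam := m * cmin.
Let h (t : R) : R := wsq L xs (x t) * exp (2 * lam * t).
Let dh (t : R) : R :=
  2 * (x t - xs) * sq_weight L xs (x t) * (c t * gf (x t)) * exp (2 * lam * t)
  + wsq L xs (x t) * (exp (2 * lam * t) * (2 * lam)).

Lemma h_derive (t : R) : 0 < t -> derivable_pt_lim h t (dh t).
Proof.
  intro Ht. destruct Hsol as [_ [_ Hder]].
  apply (derivable_pt_lim_mult (fun t => wsq L xs (x t)) (fun t => exp (2 * lam * t))).
  - apply (derivable_pt_lim_comp x (wsq L xs)); [apply Hder, Ht | apply wsq_derive, Hxs].
  - apply (derivable_pt_lim_comp (fun t => 2 * lam * t) exp);
      [apply derivable_pt_lim_scal_id | apply derivable_pt_lim_exp].
Qed.

Lemma dh_nonpos (t : R) : - d0 < x t <= L -> dh t <= 0.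
Proof.
  intro Hxt. pose proof (Hsector (x t) Hxt) as Hsec. pose proof (Hc t).
  pose proof (sq_weight_bounds L xs Hxs (x t)) as [Hw _].
  assert (0 < / (L * L)) by (apply Rinv_0_lt_compat; nra).
  pose proof (exp_pos (2 * lam * t)).
  set (E := exp (2 * lam * t)) in *. set (w := sq_weight L xs (x t)) in *.
  set (q := (x t - xs) * gf (x t)) in *. set (s2 := (x t - xs) * (x t - xs)) in *.
  assert (0 <= s2) by apply Rle_0_sqr.
  replace (dh t) with (2 * w * E * (c t * q + lam * s2)) by (unfold dh, wsq, q, s2; fold E w; ring).
  assert (c t * q <= c t * (- m * s2)) by (apply Rmult_le_compat_l; lra).
  assert (0 <= (c t - cmin) * (m * s2)) by (apply Rmult_le_pos; nra).
  assert (0 <= 2 * w * E) by nra.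
  unfold lam. nra.
Qed.

Lemma h_0 : h 0 = wsq L xs x0.
Proof.
  destruct Hsol as [Hx00 _]. unfold h. rewrite Hx00, Rmult_0_r, exp_0. ring.
Qed.

Lemma h_right_cont : right_continuous_at h 0.
Proof.
  destruct Hsol as [Hx00 [Hrc _]].
  set (xe := fun s => if Rle_dec s 0 then x 0 else x s).
  apply (right_continuous_at_agree (fun s => wsq L xs (xe s) * exp (2 * lam * s))).
  - apply continuity_pt_mult.
    + apply (continuity_pt_comp xe (wsq L xs)); [apply continuity_pt_freeze_left, Hrc|].
      apply (continuity_pt_of_derivable_pt_lim _ _ _ (wsq_derive L xs Hxs _)).
    + apply (continuity_pt_comp (fun s => 2 * lam * s) exp);
        [apply (continuity_pt_of_derivable_pt_lim _ _ _ (derivable_pt_lim_scal_id _ _))|].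
      apply derivable_continuous_pt, derivable_pt_exp.
  - intros s Hs. unfold xe, h. destruct (Rle_dec s 0) as [Hs0|]; [|reflexivity].
    replace s with 0 by lra. reflexivity.
Qed.

Lemma h_locally_nonincreasing (t : R) : 0 <= t -> h t <= h 0 ->
  exists eta, 0 < eta /\ forall u, t < u < t + eta -> h u <= h t.
Proof.
  intros Ht Hle. destruct Hsol as [Hx00 [Hrc Hder]].
  destruct (Req_dec t 0) as [->|Ht0].
  - destruct (Hrc (Rmin d0 (L - x0))) as [eta [Heta Hnear]]; [apply Rmin_glb_lt; lra|].
    exists eta. split; [exact Heta|].
    apply (le_of_derive_nonpos_right h dh); [exact h_right_cont|].
    intros s Hs. split; [apply h_derive; lra|]. apply dh_nonpos.
    pose proof (Hnear s ltac:(lra)) as Hxs'. rewrite Hx00 in Hxs'. apply Rabs_def2 in Hxs'.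
    pose proof (Rmin_l d0 (L - x0)). pose proof (Rmin_r d0 (L - x0)). lra.
  - (* [h t <= h 0 <= 1 < exp (2 lam t)] forces [x t] into the open interval *)
    assert (Hin : 0 < x t < L).
    { apply (wsq_lt_1 L xs Hxs).
      assert (0 < lam * t) by (apply Rmult_lt_0_compat; [unfold lam; nra | lra]).
      assert (1 < exp (2 * lam * t)) by (rewrite <- exp_0; apply exp_increasing; lra).
      pose proof (proj2 (wsq_le_1 L xs Hxs x0) ltac:(lra)).
      pose proof (wsq_nonneg L xs Hxs (x t)).
      rewrite h_0 in Hle. unfold h in Hle. nra. }
    pose proof (continuity_pt_of_derivable_pt_lim _ _ _ (Hder t ltac:(lra))) as Hxc.
    destruct (Hxc (Rmin (x t) (L - x t))) as [eta [Heta Hnear]]; [apply Rmin_glb_lt; lra|].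
    exists eta. split; [exact Heta|].
    apply (le_of_derive_nonpos_right h dh).
    { apply right_continuous_at_of_continuity_pt.
      apply (continuity_pt_of_derivable_pt_lim _ _ _ (h_derive t ltac:(lra))). }
    intros s Hs. split; [apply h_derive; lra|]. apply dh_nonpos.
    assert (Habs : Rabs (x s - x t) < Rmin (x t) (L - x t)).
    { apply Hnear. split; [split; [exact I | lra]|].
      simpl; unfold R_dist. rewrite Rabs_right; lra. }
    apply Rabs_def2 in Habs.
    pose proof (Rmin_l (x t) (L - x t)). pose proof (Rmin_r (x t) (L - x t)). lra.
Qed.

Lemma sector_stable (t : R) : 0 <= t ->
  0 <= x t <= L /\
  Rabs (x t - xs) <= L / Rmin xs (L - xs) * exp (- lam * t) * Rabs (x0 - xs).
Proof.
  intro Ht.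
  assert (Hh : h t <= h 0).
  { apply le_initial_of_locally_nonincreasing; [| exact h_locally_nonincreasing | exact Ht].
    intros s Hs. apply (continuity_pt_of_derivable_pt_lim _ _ _ (h_derive s Hs)). }
  rewrite h_0 in Hh. unfold h in Hh.
  assert (0 <= lam * t) by (apply Rmult_le_pos; [unfold lam; nra | lra]).
  pose proof (exp_le_compat 0 (2 * lam * t) ltac:(lra)) as He. rewrite exp_0 in He.
  pose proof (wsq_nonneg L xs Hxs (x t)).
  pose proof (proj2 (wsq_le_1 L xs Hxs x0) ltac:(lra)).
  split.
  - apply (wsq_le_1 L xs Hxs). nra.
  - apply (abs_le_of_wsq_le L xs Hxs); [left; apply exp_pos|].
    assert (HE : exp (- lam * t) * exp (- lam * t) * exp (2 * lam * t) = 1).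
    { rewrite <- !exp_plus, <- exp_0. f_equal. ring. }
    apply Rmult_le_reg_r with (exp (2 * lam * t)); [apply exp_pos|].
    rewrite (Rmult_assoc (wsq L xs x0)), HE. lra.
Qed.

End SectorStability.

Lemma continuity_pt_gt_near (f : R -> R) (a c : R) :
  continuity_pt f a -> c < f a -> exists d, 0 < d /\ forall z, Rabs (z - a) < d -> c < f z.
Proof.
  intros Hf Hc. destruct (Hf (f a - c)) as [d [Hd Hnear]]; [lra|].
  exists d. split; [exact Hd|]. intros z Hz.
  destruct (Req_dec z a) as [->|Hza]; [lra|].
  assert (Habs : Rabs (f z - f a) < f a - c).
  { apply Hnear. split; [split; [exact I | auto] | exact Hz]. }
  apply Rabs_def2 in Habs. lra.
Qed.

Lemma vstar_bounds (th2 z : R) : 0 < th2 -> 0 < z -> 0 < vstar th2 z < 1.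
Proof.
  intros Hth Hz. unfold vstar.
  split; [apply Rdiv_lt_0_compat; nra | apply Rlt_div_l; nra].
Qed.

Lemma vstar_sub (th2 y z : R) : 0 < th2 -> 0 <= y -> 0 <= z ->
  vstar th2 y - vstar th2 z = th2 / ((1 + th2 * y) * (1 + th2 * z)) * (y - z).
Proof. intros. unfold vstar. field. split; nra. Qed.

(* [1 - exp (-a y) <= a y] bounds the normalized exponential profile of both branches. *)
Lemma exp_profile_bounds (a y Y : R) : 0 < a -> 0 <= y <= Y ->
  0 <= (1 - exp (- a * y)) / (1 - exp (- a * Y)) <= 1 /\
  (1 - exp (- a * y)) / (1 - exp (- a * Y)) <= a / (1 - exp (- a * Y)) * y.
Proof.
  intros Ha Hy. destruct (Req_dec y 0) as [->|Hy0].
  { rewrite Rmult_0_r, exp_0, Rminus_diag. unfold Rdiv. rewrite Rmult_0_l, Rmult_0_r. lra. }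
  assert (HY : exp (- a * Y) < 1) by (rewrite <- Ropp_mult_distr_l; apply exp_neg_lt_1; nra).
  assert (Hey : exp (- a * Y) <= exp (- a * y)) by (apply exp_le_compat; nra).
  assert (Hey1 : exp (- a * y) <= 1) by (rewrite <- exp_0; apply exp_le_compat; nra).
  pose proof (exp_ineq1_le (- a * y)).
  replace (a / (1 - exp (- a * Y)) * y) with ((a * y) / (1 - exp (- a * Y))) by (field; lra).
  split; [split|].
  - apply Rdiv_le_0_compat; lra.
  - rewrite <- Rdiv_le_1 by lra. lra.
  - apply Rmult_le_compat_r; [left; apply Rinv_0_lt_compat|]; lra.
Qed.

Definition sector_gain (L th2 xs : R) : R := th2 / ((1 + th2 * xs) * (1 + th2 * L)).

Section ClosedLoop.

Variables L th2 vmax al ar xs : R.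
Hypothesis Hth2 : 0 < th2.
Hypothesis Hxs : 0 < xs < L.
Hypothesis Hvmax : vstar th2 xs < vmax < 1.
Hypothesis Hal : 0 < al.
Hypothesis Har : 0 < ar.

Local Notation U := (feedback L th2 vmax al ar xs).
Local Notation vs := (vstar th2 xs).
Local Notation m := (sector_gain L th2 xs).

Definition drift (z : R) : R := - (th2 * z) / ((1 + th2 * z) * (1 - U z)) + U z / (1 - U z).

Local Notation g := drift.

Lemma vs_bounds : 0 < vs < 1.
Proof. apply vstar_bounds; lra. Qed.

Lemma sector_gain_pos : 0 < m.
Proof. unfold sector_gain. apply Rdiv_lt_0_compat; [lra | apply Rmult_lt_0_compat; nra]. Qed.

Lemma feedback_left (z : R) : 0 <= z <= xs ->
  U z = v_left th2 vmax al xs z /\ vs <= U z <= vmax /\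
  U z - vs <= (vmax - vs) * (al / (1 - exp (- al * xs))) * (xs - z).
Proof.
  intro Hz.
  assert (HU : U z = v_left th2 vmax al xs z)
    by (unfold feedback; destruct (Rle_dec z xs); [reflexivity | lra]).
  rewrite HU. split; [reflexivity|]. unfold v_left.
  replace (al * (z - xs)) with (- al * (xs - z)) by ring.
  destruct (exp_profile_bounds al (xs - z) xs Hal ltac:(lra)) as [H01 Hlin].
  split; nra.
Qed.

Lemma feedback_right (z : R) : xs < z <= L ->
  U z = v_right L th2 ar xs z /\ 0 <= U z <= vs /\
  vs - U z <= vs * (ar / (1 - exp (- ar * (L - xs)))) * (z - xs).
Proof.
  intro Hz. pose proof vs_bounds.
  assert (HU : U z = v_right L th2 ar xs z)
    by (unfold feedback; destruct (Rle_dec z xs); [lra | reflexivity]).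
  rewrite HU. split; [reflexivity|]. unfold v_right.
  destruct (exp_profile_bounds ar (z - xs) (L - xs) Har ltac:(lra)) as [H01 Hlin].
  split; nra.
Qed.

Lemma feedback_xs : U xs = vs.
Proof.
  unfold feedback. destruct (Rle_dec xs xs); [|lra]. unfold v_left.
  rewrite Rminus_diag, Rmult_0_r, exp_0, Rminus_diag. unfold Rdiv. ring.
Qed.

Lemma feedback_bounds (z : R) : 0 <= z <= L -> 0 <= U z <= vmax.
Proof.
  intro Hz. pose proof vs_bounds.
  destruct (Rle_lt_dec z xs).
  - pose proof (feedback_left z ltac:(lra)). lra.
  - pose proof (feedback_right z ltac:(lra)). lra.
Qed.

(* [vstar z] is the inlet filling ratio that keeps [z] at rest. *)
Lemma drift_mul (z : R) : 0 <= z <= L -> g z * (1 - U z) = U z - vstar th2 z.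
Proof.
  intro Hz. pose proof (feedback_bounds z Hz). unfold drift, vstar. field. split; nra.
Qed.

Lemma vstar_sub_sector (z : R) : 0 <= z <= L ->
  exists q, m <= q <= th2 /\ vs - vstar th2 z = q * (xs - z).
Proof.
  intro Hz. exists (th2 / ((1 + th2 * xs) * (1 + th2 * z))).
  split; [|apply vstar_sub; lra].
  assert (0 < 1 + th2 * z) by nra. assert (0 < 1 + th2 * xs) by nra.
  split.
  - unfold sector_gain. apply Rmult_le_compat_l; [lra|].
    apply Rinv_le_contravar; [nra|]. apply Rmult_le_compat_l; nra.
  - assert (0 <= th2 * z) by (apply Rmult_le_pos; lra).
    assert (0 <= th2 * xs) by (apply Rmult_le_pos; lra).
    assert (1 <= (1 + th2 * xs) * (1 + th2 * z)) by nra.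
    rewrite Rle_div_l by nra. nra.
Qed.

Lemma feedback_right_bound (z : R) : xs <= z <= L ->
  0 <= U z <= vs /\ vs - U z <= vs * (ar / (1 - exp (- ar * (L - xs)))) * (z - xs).
Proof.
  intro Hz. destruct (Req_dec z xs) as [->|Hzxs].
  - rewrite feedback_xs, !Rminus_diag, Rmult_0_r. pose proof vs_bounds. lra.
  - pose proof (feedback_right z ltac:(lra)). tauto.
Qed.

Lemma drift_xs : g xs = 0.
Proof.
  pose proof (drift_mul xs ltac:(lra)) as H. rewrite feedback_xs, Rminus_diag in H.
  pose proof vs_bounds. apply Rmult_integral in H as [H|H]; lra.
Qed.

Lemma drift_ge_left (z : R) : 0 <= z <= xs -> U z - vstar th2 z <= g z.
Proof.
  intro Hz. pose proof (drift_mul z ltac:(lra)) as Hg.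
  destruct (feedback_left z Hz) as [_ [HU _]].
  destruct (vstar_sub_sector z ltac:(lra)) as [q [Hq Hv]].
  pose proof sector_gain_pos. pose proof vs_bounds.
  assert (Hg0 : 0 <= g z) by nra.
  nra.
Qed.

Lemma drift_lower_left (z : R) : 0 <= z <= xs -> m * (xs - z) <= g z.
Proof.
  intro Hz. pose proof (drift_ge_left z Hz).
  destruct (feedback_left z Hz) as [_ [HU _]].
  destruct (vstar_sub_sector z ltac:(lra)) as [q [Hq Hv]].
  nra.
Qed.

Lemma drift_upper_left :
  exists K, 0 < K /\ forall z, 0 <= z <= xs -> g z <= K * (xs - z).
Proof.
  pose proof (exp_neg_lt_1 (al * xs) ltac:(nra)) as HE.
  rewrite Ropp_mult_distr_l in HE.
  set (C := (vmax - vs) * (al / (1 - exp (- al * xs)))).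
  assert (HC : 0 <= C).
  { apply Rmult_le_pos; [lra | apply Rlt_le, Rdiv_lt_0_compat; lra]. }
  exists ((C + th2) / (1 - vmax)). split; [apply Rdiv_lt_0_compat; lra|].
  intros z Hz. pose proof (drift_mul z ltac:(lra)) as Hg.
  pose proof (drift_lower_left z Hz). pose proof sector_gain_pos.
  destruct (feedback_left z Hz) as [_ [HU HUC]]. fold C in HUC.
  destruct (vstar_sub_sector z ltac:(lra)) as [q [Hq Hv]].
  assert (0 <= g z * (vmax - U z)) by (apply Rmult_le_pos; nra).
  assert (q * (xs - z) <= th2 * (xs - z)) by (apply Rmult_le_compat_r; lra).
  assert (Hgz : g z * (1 - vmax) <= (C + th2) * (xs - z)) by nra.
  apply Rmult_le_reg_r with (1 - vmax); [lra|].
  replace ((C + th2) / (1 - vmax) * (xs - z) * (1 - vmax)) with ((C + th2) * (xs - z))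
    by (field; lra).
  exact Hgz.
Qed.

Lemma drift_upper_right (z : R) : xs <= z <= L -> g z <= - m * (z - xs).
Proof.
  intro Hz. pose proof (drift_mul z ltac:(lra)) as Hg.
  destruct (feedback_right_bound z Hz) as [HU _].
  destruct (vstar_sub_sector z ltac:(lra)) as [q [Hq Hv]].
  pose proof sector_gain_pos. pose proof vs_bounds.
  assert (Hg0 : g z <= 0) by nra.
  nra.
Qed.

Lemma drift_lower_right :
  exists K, 0 < K /\ forall z, xs <= z <= L -> - g z <= K * (z - xs).
Proof.
  pose proof vs_bounds.
  pose proof (exp_neg_lt_1 (ar * (L - xs)) ltac:(nra)) as HE.
  rewrite Ropp_mult_distr_l in HE.
  set (C := vs * (ar / (1 - exp (- ar * (L - xs))))).
  assert (HC : 0 <= C).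
  { apply Rmult_le_pos; [lra | apply Rlt_le, Rdiv_lt_0_compat; lra]. }
  exists ((C + th2) / (1 - vs)). split; [apply Rdiv_lt_0_compat; lra|].
  intros z Hz. pose proof (drift_mul z ltac:(lra)) as Hg.
  pose proof (drift_upper_right z Hz). pose proof sector_gain_pos.
  destruct (feedback_right_bound z Hz) as [HU HUC]. fold C in HUC.
  destruct (vstar_sub_sector z ltac:(lra)) as [q [Hq Hv]].
  assert (0 <= - g z * (vs - U z)) by (apply Rmult_le_pos; nra).
  assert (q * (z - xs) <= th2 * (z - xs)) by (apply Rmult_le_compat_r; lra).
  assert (Hgz : - g z * (1 - vs) <= (C + th2) * (z - xs)) by nra.
  apply Rmult_le_reg_r with (1 - vs); [lra|].
  replace ((C + th2) / (1 - vs) * (z - xs) * (1 - vs)) with ((C + th2) * (z - xs))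
    by (field; lra).
  exact Hgz.
Qed.

Lemma drift_cont_left (z : R) : 0 <= z < xs -> continuity_pt g z.
Proof.
  intro Hz. destruct (feedback_left z ltac:(lra)) as [HU [Hb _]]. rewrite HU in Hb.
  apply (continuity_pt_ext_loc (fun u => - (th2 * u) / ((1 + th2 * u) * (1 - v_left th2 vmax al xs u))
      + v_left th2 vmax al xs u / (1 - v_left th2 vmax al xs u))).
  - exists (mkposreal (xs - z) ltac:(lra)). intros u Hu.
    change (Rabs (u - z) < xs - z) in Hu. apply Rabs_def2 in Hu.
    unfold drift, feedback. destruct (Rle_dec u xs); [reflexivity | lra].
  - assert (Hne : 1 - v_left th2 vmax al xs z <> 0) by lra.
    assert (Hne' : 1 + th2 * z <> 0) by nra.
    apply continuity_pt_of_ex_derive. unfold v_left, vstar in *.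
    auto_derive. repeat split; [apply Rmult_integral_contrapositive_currified | ..]; assumption.
Qed.

Lemma drift_cont_right (z : R) : xs < z <= L -> continuity_pt g z.
Proof.
  intro Hz. pose proof vs_bounds. destruct (feedback_right z Hz) as [HU [Hb _]]. rewrite HU in Hb.
  apply (continuity_pt_ext_loc (fun u => - (th2 * u) / ((1 + th2 * u) * (1 - v_right L th2 ar xs u))
      + v_right L th2 ar xs u / (1 - v_right L th2 ar xs u))).
  - exists (mkposreal (z - xs) ltac:(lra)). intros u Hu.
    change (Rabs (u - z) < z - xs) in Hu. apply Rabs_def2 in Hu.
    unfold drift, feedback. destruct (Rle_dec u xs); [lra | reflexivity].
  - assert (Hne : 1 - v_right L th2 ar xs z <> 0) by lra.
    assert (Hne' : 1 + th2 * z <> 0) by nra.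
    apply continuity_pt_of_ex_derive. unfold v_right, vstar in *.
    auto_derive. repeat split; [apply Rmult_integral_contrapositive_currified | ..]; assumption.
Qed.

Lemma drift_0_gt : m * xs < g 0.
Proof.
  pose proof (drift_ge_left 0 ltac:(lra)) as Hg.
  destruct (feedback_left 0 ltac:(lra)) as [_ [HU _]].
  assert (Hv0 : vstar th2 0 = 0) by (unfold vstar; rewrite Rmult_0_r; unfold Rdiv; ring).
  assert (Hm : m * xs * (1 + th2 * L) = vs) by (unfold sector_gain, vstar; field; split; nra).
  pose proof sector_gain_pos.
  assert (0 < m * xs * (th2 * L))
    by (apply Rmult_lt_0_compat; apply Rmult_lt_0_compat; lra).
  assert (m * xs + m * xs * (th2 * L) = vs) by (rewrite <- Hm; ring).
  rewrite Hv0 in Hg. lra.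
Qed.

Lemma sector_condition :
  exists d0, 0 < d0 /\ forall z, - d0 < z <= L -> (z - xs) * g z <= - m * ((z - xs) * (z - xs)).
Proof.
  pose proof sector_gain_pos as Hm. pose proof drift_0_gt.
  set (eta := (g 0 - m * xs) / 2).
  assert (Heta : 0 < eta) by (unfold eta; lra).
  destruct (continuity_pt_gt_near g 0 (m * xs + eta)) as [d [Hd Hnear]].
  { apply drift_cont_left. lra. }
  { unfold eta. lra. }
  assert (Hd0 : 0 < Rmin d (Rmin xs (eta / m))).
  { apply Rmin_glb_lt; [lra | apply Rmin_glb_lt; [lra | apply Rdiv_lt_0_compat; lra]]. }
  exists (Rmin d (Rmin xs (eta / m))). split; [exact Hd0|].
  intros z Hz. destruct (Rlt_le_dec z 0) as [Hz0|Hz0].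
  - (* below [0] the strict inequality [m xs < g 0] persists by continuity *)
    pose proof (Rmin_l d (Rmin xs (eta / m))).
    pose proof (Rmin_r d (Rmin xs (eta / m))).
    pose proof (Rmin_l xs (eta / m)). pose proof (Rmin_r xs (eta / m)).
    assert (Hgz : m * xs + eta < g z) by (apply Hnear; rewrite Rminus_0_r, Rabs_left; lra).
    assert (Hmeta : m * (eta / m) = eta) by (field; lra).
    assert (m * (- z) <= eta) by nra.
    nra.
  - destruct (Rle_lt_dec z xs).
    + pose proof (drift_lower_left z ltac:(lra)). nra.
    + pose proof (drift_upper_right z ltac:(lra)). nra.
Qed.

Lemma drift_solution (x0 : R) : 0 <= x0 < L -> exists y, solves (fun _ z => g z) y x0.
Proof.
  intro Hx0. pose proof sector_gain_pos.
  destruct (Rtotal_order x0 xs) as [Hlt|[->|Hgt]].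
  - destruct drift_upper_left as [K [HK Hup]].
    apply (solves_increasing g x0 xs K); try lra.
    + intros z Hz. apply drift_cont_left. lra.
    + intros z Hz. pose proof (drift_lower_left z ltac:(lra)). nra.
    + intros z Hz. apply Hup. lra.
  - exists (fun _ => xs). split; [reflexivity | split].
    + intros e He. exists 1. split; [lra|]. intros s _. rewrite Rminus_diag, Rabs_R0. exact He.
    + intros t _. rewrite drift_xs. apply derivable_pt_lim_const.
  - (* reflect [z -> - z] to reuse the increasing case *)
    destruct drift_lower_right as [K [HK Hlow]].
    destruct (solves_increasing (fun z => - g (- z)) (- x0) (- xs) K) as [y Hy]; try lra.
    + intros z Hz. apply continuity_pt_opp.
      apply (continuity_pt_comp (fun z => - z) g);
        [apply continuity_pt_opp, derivable_continuous_pt, derivable_pt_id|].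
      apply drift_cont_right. lra.
    + intros z Hz. pose proof (drift_upper_right (- z) ltac:(lra)). nra.
    + intros z Hz. replace (- xs - z) with (- z - xs) by ring. apply Hlow. lra.
    + exists (fun t => - y t). apply solves_opp. exact Hy.
Qed.

End ClosedLoop.

Lemma cfun_ge (th1 eps om t : R) : 0 < th1 -> 0 <= eps < 1 ->
  th1 * (1 - eps) <= cfun th1 eps om t.
Proof.
  intros Hth Heps. unfold cfun. pose proof (COS_bound (om * t)).
  assert (0 <= th1 * (eps * (cos (om * t) + 1)))
    by (apply Rmult_le_pos; [lra | apply Rmult_le_pos; lra]).
  nra.
Qed.

Lemma cfun_primitive (th1 eps om : R) : 0 < th1 -> 0 <= eps < 1 -> 0 <= om ->
  exists tau : R -> R, tau 0 = 0 /\
    (forall t, derivable_pt_lim tau t (cfun th1 eps om t)) /\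
    (forall t, 0 < t -> 0 < tau t).
Proof.
  intros Hth Heps Hom. destruct (Req_dec om 0) as [->|Hom0].
  - exists (fun t => th1 * (1 + eps) * t). split; [ring | split].
    + intro t. unfold cfun. rewrite Rmult_0_l, cos_0, Rmult_1_r.
      apply derivable_pt_lim_scal_id.
    + intros t Ht. apply Rmult_lt_0_compat; nra.
  - exists (fun t => th1 * t + th1 * eps * sin (om * t) / om). split; [|split].
    + rewrite !Rmult_0_r, sin_0. field. exact Hom0.
    + intro t. unfold cfun. apply is_derive_Reals. auto_derive; [exact I | field; exact Hom0].
    + (* [om t + eps sin (om t) > 0]: [sin > 0] on [(0, pi)], and [om t >= pi > eps] beyond *)
      intros t Ht.
      assert (0 < om * t + eps * sin (om * t)).
      { destruct (Rlt_le_dec (om * t) PI).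
        - assert (0 < sin (om * t)) by (apply sin_gt_0; nra). nra.
        - pose proof (SIN_bound (om * t)). pose proof PI2_1. nra. }
      replace (th1 * t + th1 * eps * sin (om * t) / om)
        with (th1 * (om * t + eps * sin (om * t)) / om) by (field; exact Hom0).
      apply Rdiv_lt_0_compat; nra.
Qed.

Lemma cl_solution_solves (L th1 th2 eps om vmax al ar xs x0 : R) (x : R -> R) :
  cl_solution L th1 th2 eps om vmax al ar xs x0 x <->
  solves (fun t z => cfun th1 eps om t * drift L th2 vmax al ar xs z) x x0.
Proof.
  unfold cl_solution, solves, right_continuous_at.
  split; intros [Hx0 [Hrc Hder]]; (split; [exact Hx0 | split; [| exact Hder]]);
    intros e He; destruct (Hrc e He) as [d [Hd Hnear]]; exists d; split; try exact Hd;
    intros s Hs; rewrite Hx0 in *; rewrite Rplus_0_l in *; apply Hnear, Hs.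
Qed.

Theorem theorem1
  (L th1 th2 eps om xs vmax S al ar : R)
  (HL : 0 < L) (Hth1 : 0 < th1) (Hth2 : 0 < th2)
  (Heps : 0 <= eps < 1) (Hom : 0 <= om)
  (Hxs : 0 < xs < L)
  (Hvmax : vstar th2 xs < vmax < 1)
  (HS : S >= Smin L th2 vmax xs)
  (Hal : 0 < al) (Har : 0 < ar)
  (Hal_eq : al * (vmax - vstar th2 xs) - S * (1 - exp (- al * xs)) = 0)
  (Har_eq : ar * vstar th2 xs - S * (1 - exp (- ar * (L - xs))) = 0) :
  exists k lam : R, 0 < k /\ 0 < lam /\
    forall x0 : R, 0 <= x0 < L ->
      (exists x : R -> R, cl_solution L th1 th2 eps om vmax al ar xs x0 x) /\
      (forall x : R -> R, cl_solution L th1 th2 eps om vmax al ar xs x0 x ->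
         forall t : R, 0 <= t ->
           0 <= x t <= L /\
           Rabs (x t - xs) <= k * exp (- lam * t) * Rabs (x0 - xs)).
Proof.
  pose proof (sector_gain_pos L th2 xs Hth2 Hxs) as Hm.
  assert (Hcmin : 0 < th1 * (1 - eps)) by nra.
  assert (Hrmin : 0 < Rmin xs (L - xs)) by (apply Rmin_glb_lt; lra).
  exists (L / Rmin xs (L - xs)), (sector_gain L th2 xs * (th1 * (1 - eps))).
  split; [apply Rdiv_lt_0_compat; lra | split; [nra|]].
  intros x0 Hx0. split.
  - destruct (cfun_primitive th1 eps om Hth1 Heps Hom) as [tau [Htau0 [Htau Htau_pos]]].
    destruct (drift_solution L th2 vmax al ar xs Hth2 Hxs Hvmax Hal Har x0 Hx0) as [y Hy].
    exists (fun t => y (tau t)). apply cl_solution_solves.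
    exact (solves_time_change _ _ tau y x0 Htau0 Htau Htau_pos Hy).
  - intros x Hx t Ht. apply cl_solution_solves in Hx.
    destruct (sector_condition L th2 vmax al ar xs Hth2 Hxs Hvmax Hal Har) as [d0 [Hd0 Hsec]].
    apply (sector_stable (cfun th1 eps om) (drift L th2 vmax al ar xs) x x0 xs L
             (sector_gain L th2 xs) (th1 * (1 - eps)) d0); try assumption.
    intro s. apply cfun_ge; assumption.
Qed.
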